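(* Let $n\ge2$, let $\mathbf{x}=(x_1,\dots,x_n)^T\in\mathbb{C}^n$ with $x_i\neq x_j$ for all $i\neq j$, and let $F$, $p$, $F''$ be as in the context. Let $\mathbf{y}$ be the result of one step of the Chebyshev method for $F$ starting from $\mathbf{x}$, i.e. \[ \mathbf{y}=\mathbf{x}-F'(\mathbf{x})^{-1}\Big(F(\mathbf{x})+\tfrac12\,F''(\mathbf{x})\big(F'(\mathbf{x})^{-1}F(\mathbf{x}),\,F'(\mathbf{x})^{-1}F(\mathbf{x})\big)\Big). \] With $W_l=\dfrac{p(x_l)}{\prod_{j=1,\,j\neq l}^n(x_l-x_j)}$ for $l=1,\dots,n$, one has for every $j=1,\dots,n$ \[ y_j=x_j-W_j\Big(1+\sum_{\nu=1,\,\nu\neq j}^n\frac{W_\nu}{x_\nu-x_j}\Big). \] Equivalently, with $B^{(l)}(t)=-\prod_{i=1,\,i\neq l}^n(t-x_i)$, \[ y_j=x_j-\frac{p(x_j)}{B^{(j)}(x_j)}\Big(\sum_{\nu=1,\,\nu\neq j}^n\frac{p(x_\nu)}{(x_\nu-x_j)\,B^{(\nu)}(x_\nu)}-1\Big). \]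
   Context: Let $p(t)=t^n+a_{n-1}t^{n-1}+\dots+a_1t+a_0$ be a monic polynomial of degree $n$ with real coefficients, and set $\mathbf{a}=(a_0,a_1,\dots,a_{n-1})^T$. Define $V=(v_1,\dots,v_n)^T:\mathbb{C}^n\to\mathbb{C}^n$ by \[ v_{n-\nu+1}(\mathbf{x})=\sum_{i_1<i_2<\dots<i_\nu}(-x_{i_1})(-x_{i_2})\cdots(-x_{i_\nu}),\qquad \nu=1,\dots,n, \] (the sum running over all $\nu$-element index sets $\{i_1<\dots<i_\nu\}\subseteq\{1,\dots,n\}$), so that $\prod_{j=1}^n(t-x_j)=t^n+\sum_{j=0}^{n-1}v_{j+1}(\mathbf{x})t^j$. Define $F=(f_1,\dots,f_n)^T:\mathbb{C}^n\to\mathbb{C}^n$ by $F(\mathbf{x})=V(\mathbf{x})-\mathbf{a}$, with Jacobian $F'(\mathbf{x})$ (invertible when the $x_i$ are pairwise distinct). For $k=1,\dots,n$, $A^{(k)}(\mathbf{x})\in\mathbb{C}^{n\times n}$ is the matrix whose $(i,l)$ entry is $\partial^2 f_i(\mathbf{x})/\partial x_l\partial x_k$, and the second derivative is the bilinear map $F''(\mathbf{x})(\mathbf{y},\mathbf{z})=\sum_{k=1}^n z_k\,A^{(k)}(\mathbf{x})\,\mathbf{y}$ for $\mathbf{y},\mathbf{z}\in\mathbb{C}^n$, i.e. $F''(\mathbf{x})(\mathbf{y},\mathbf{z})_i=\sum_{k,l}\frac{\partial^2 f_i(\mathbf{x})}{\partial x_l\partial x_k}y_l z_k$. *)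

From HB Require Import structures.
From mathcomp Require Import all_boot all_order all_algebra.
From mathcomp Require Import mpoly.
From mathcomp Require Import complex.
From mathcomp Require Import reals.
Set Implicit Arguments. Unset Strict Implicit. Unset Printing Implicit Defensive.
Import Order.TTheory GRing.Theory Num.Theory.
Local Open Scope ring_scope.

Section Cheb.
Variables (R : realType) (n : nat).
Local Notation C := (R[i]).

(* V as a polynomial map; 0-based component k corresponds to v_{k+1};
   v_{n-nu+1} = sum over nu-subsets of prod (-x_i), i.e. nu = n - k. *)
Definition Vpoly (k : 'I_n) : {mpoly C[n]} :=
  \sum_(S : {set 'I_n} | #|S| == (n - k)%N) \prod_(i in S) (- 'X_i).

Definition Fpoly (a : 'I_n -> R) (k : 'I_n) : {mpoly C[n]} :=
  Vpoly k - ((a k)%:C)%C%:MP.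

Definition Fval (a : 'I_n -> R) (x : 'I_n -> C) : 'cV[C]_n :=
  \col_k (Fpoly a k).@[x].

Definition Fjac (a : 'I_n -> R) (x : 'I_n -> C) : 'M[C]_n :=
  \matrix_(i, l) (mderiv l (Fpoly a i)).@[x].

Definition Ahess (a : 'I_n -> R) (x : 'I_n -> C) (k : 'I_n) : 'M[C]_n :=
  \matrix_(i, l) (mderiv l (mderiv k (Fpoly a i))).@[x].

Definition F2 (a : 'I_n -> R) (x : 'I_n -> C) (y z : 'cV[C]_n) : 'cV[C]_n :=
  \sum_k z k 0 *: (Ahess a x k *m y).

Definition cheb_step (a : 'I_n -> R) (x : 'I_n -> C) : 'cV[C]_n :=
  let Ji := invmx (Fjac a x) in
  let d := Ji *m Fval a x in
  (\col_k x k) - Ji *m (Fval a x + 2^-1 *: F2 a x d d).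

Definition ppoly (a : 'I_n -> R) : {poly C} :=
  'X^n + \sum_(i < n) ((a i)%:C)%C *: 'X^i.

Definition Weier (a : 'I_n -> R) (x : 'I_n -> C) (l : 'I_n) : C :=
  (ppoly a).[x l] / \prod_(j < n | j != l) (x l - x j).

Definition Bpoly (x : 'I_n -> C) (l : 'I_n) : {poly C} :=
  - \prod_(i < n | i != l) ('X - (x i)%:P).

End Cheb.

From HB Require Import structures.
From mathcomp Require Import all_boot all_order all_algebra.
From mathcomp Require Import mpoly.
From mathcomp Require Import complex.
From mathcomp Require Import reals.
From mathcomp Require Import ring.
Import Order.TTheory GRing.Theory Num.Theory.
Local Open Scope ring_scope.
Set Implicit Arguments. Unset Strict Implicit. Unset Printing Implicit Defensive.

(* Let E be the n x n matrix whose j-th row is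
   (1, x_j, x_j^2, ..., x_j^(n-1)).  Vieta's formulas say that, as polynomials
   in the variables X, sum_k c^k v_(k+1)(X) = prod_i (c - X_i) - c^n for every
   constant c.  Differentiating this identity once and twice with respect to
   the X_l and evaluating at X = x, c = x_j gives, with P_j = prod_(i<>j)(x_j-x_i),
     (E F(x))_j = - p(x_j),         E F'(x) = diag(- P_j),
     (E F''(x)(d,d))_j = sum_(l<>m) d_l d_m prod_(i<>l,m) (x_j - x_i).
   Hence F'(x) is invertible with (F'(x)^-1 v)_j = - (E v)_j / P_j, the Newton
   correction F'(x)^-1 F(x) is the vector of Weierstrass corrections W_j, and in
   the double sum only the terms with l = j or m = j survive.  Substituting
   these three facts into the Chebyshev step gives the first formula; the second
   one is a rewriting of the first using B^(j)(x_j) = - P_j. *)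

Section ProductDerivatives.
Variables (R : comNzRingType) (n : nat).

Lemma mderivXU (i l : 'I_n) :
  mderiv l ('X_i : {mpoly R[n]}) = (i == l)%:R.
Proof.
rewrite mderivX mnm1E; case: eqP => [->|_]; last by rewrite scale0r.
by rewrite -[X in (X - _)%MM]add0m addmK mpolyX0 scale1r.
Qed.

Lemma mderiv_prod_free (P : pred 'I_n) (c : R) (l : 'I_n) : ~~ P l ->
  mderiv l (\prod_(i | P i) (c%:MP - 'X_i)) = 0.
Proof.
move=> Pl; apply: (big_ind (fun p : {mpoly R[n]} => mderiv l p = 0)).
- by rewrite -mpolyC1 mderivC.
- by move=> p q dp dq; rewrite mderivM dp dq mul0r mulr0 addr0.
- move=> i Pi; rewrite mderivB mderivC mderivXU.
  by case: eqP => [il|_]; [move: Pl; rewrite -il Pi | rewrite subr0].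
Qed.

Lemma mderiv_prod (P : pred 'I_n) (c : R) (l : 'I_n) :
  mderiv l (\prod_(i | P i) (c%:MP - 'X_i)) =
  if P l then - \prod_(i | P i && (i != l)) (c%:MP - 'X_i) else 0.
Proof.
case: ifP => Pl; last by apply: mderiv_prod_free; rewrite Pl.
rewrite (bigD1 l) //= mderivM mderiv_prod_free ?eqxx ?andbF // mulr0 addr0.
by rewrite mderivB mderivC mderivXU eqxx sub0r mulN1r.
Qed.

End ProductDerivatives.

Section Vieta.
Variables (R : realType) (n : nat).
Local Notation C := (R[i]).

(* Sets J are grouped by the exponent n - #|J| of c they contribute. *)
Lemma inord_subn_card (J : {set 'I_n}) (k : 'I_n.+1) :
  (inord (n - #|J|) == k :> 'I_n.+1) = (#|J| == n - k)%N.
Proof.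
have cardJ : (#|J| <= n)%N by rewrite -[X in (_ <= X)%N](card_ord n) max_card.
have le_kn : (k <= n)%N by rewrite -ltnS.
rewrite -val_eqE /= inordK ?ltnS ?leq_subr //.
by apply/eqP/eqP => [<-|->]; rewrite subKn.
Qed.

Lemma Vpoly_generating (c : C) :
  \sum_(k < n) c ^+ k *: Vpoly R k = \prod_(i < n) (c%:MP - 'X_i) - (c ^+ n)%:MP.
Proof.
have -> : \prod_(i < n) (c%:MP - 'X_i) =
          \prod_(i < n) ((- 'X_i : {mpoly C[n]}) + c%:MP).
  by apply: eq_bigr => i _; rewrite addrC.
rewrite bigA_distr.
have expand_term (J : {set 'I_n}) :
    \prod_(i < n) (if i \in J then (- 'X_i : {mpoly C[n]}) else c%:MP) =
    c ^+ (n - #|J|) *: \prod_(i in J) (- 'X_i).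
  rewrite (bigID (fun i => i \in J)) /=.
  rewrite [X in _ * X](eq_bigr (fun _ => c%:MP)); last by move=> i /negbTE ->.
  rewrite [X in X * _](eq_bigr (fun i => - 'X_i)); last by move=> i ->.
  rewrite prodr_const mulrC -rmorphXn mul_mpolyC; congr (_ ^+ _ *: _).
  have cardJC := cardC J; rewrite card_ord in cardJC.
  transitivity (#|J| + #|[predC J]| - #|J|)%N; last by rewrite cardJC.
  by rewrite addKn; apply: eq_card => i; rewrite !inE.
rewrite (eq_bigr _ (fun J _ => expand_term J)).
rewrite (partition_big (fun J : {set 'I_n} => inord (n - #|J|) : 'I_n.+1) xpredT) //=.
rewrite big_ord_recr /= (eq_bigl (pred1 set0)); last first.
  by move=> J; rewrite inord_subn_card /= subnn cards_eq0.
rewrite big_pred1_eq big_set0 cards0 subn0 -mul_mpolyC mulr1 addrK.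
apply: eq_bigr => k _; rewrite /Vpoly scaler_sumr; apply: eq_big => J.
  by rewrite inord_subn_card.
by move=> /eqP ->; rewrite subKn //; apply: ltnW.
Qed.

Variable x : 'I_n -> C.

Lemma meval_prod_linear (P : pred 'I_n) (c : C) :
  (\prod_(i | P i) (c%:MP - 'X_i) : {mpoly C[n]}).@[x] = \prod_(i | P i) (c - x i).
Proof.
rewrite rmorph_prod; apply: eq_bigr => i _.
by rewrite rmorphB /= mevalC mevalXU.
Qed.

(* The second partial derivatives of the generating function, at X = x. *)
Definition hess_kernel (c : C) (l m : 'I_n) : C :=
  if l == m then 0 else \prod_(i | (i != m) && (i != l)) (c - x i).

Lemma Vpoly_generating_eval (c : C) :
  \sum_(k < n) c ^+ k * (Vpoly R k).@[x] = \prod_(i < n) (c - x i) - c ^+ n.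
Proof.
have := congr1 (meval x) (Vpoly_generating c).
rewrite raddf_sum mevalB mevalC meval_prod_linear => <-.
by apply: eq_bigr => k _; rewrite /= mevalZ.
Qed.

Lemma dVpoly_generating_eval (c : C) (l : 'I_n) :
  \sum_(k < n) c ^+ k * (mderiv l (Vpoly R k)).@[x] =
  - \prod_(i | i != l) (c - x i).
Proof.
have := congr1 (fun p => (mderiv l p).@[x]) (Vpoly_generating c).
rewrite /= mderivB mderivC subr0 (mderiv_prod xpredT) /=.
rewrite (raddf_sum (mderiv l)) (raddf_sum (meval x)) mevalN meval_prod_linear => <-.
by apply: eq_bigr => k _; rewrite /= mderivZ mevalZ.
Qed.

Lemma ddVpoly_generating_eval (c : C) (l m : 'I_n) :
  \sum_(k < n) c ^+ k * (mderiv l (mderiv m (Vpoly R k))).@[x] = hess_kernel c l m.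
Proof.
have := congr1 (fun p => (mderiv l (mderiv m p)).@[x]) (Vpoly_generating c).
rewrite /= !mderivB !mderivC subr0 (mderiv_prod xpredT) /= mderivN.
rewrite (mderiv_prod (fun i => i != m)) (raddf_sum (mderiv m)).
rewrite (raddf_sum (mderiv l)) (raddf_sum (meval x)) => generating.
rewrite (eq_bigr (fun k : 'I_n => (mderiv l (mderiv m (c ^+ k *: Vpoly R k))).@[x])).
  rewrite generating /hess_kernel; case: (eqVneq l m) => [->|_] /=.
    by rewrite oppr0 meval0.
  by rewrite opprK meval_prod_linear.
by move=> k _; rewrite /= !mderivZ mevalZ.
Qed.

End Vieta.

Section ChebyshevStep.
Variables (R : realType) (n : nat) (a : 'I_n -> R) (x : 'I_n -> R[i]).
Local Notation C := (R[i]).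
Hypothesis x_distinct : forall i j : 'I_n, i != j -> x i != x j.

Definition powmx : 'M[C]_n := \matrix_(j, k) x j ^+ k.

Definition node_prod (j : 'I_n) : C := \prod_(i | i != j) (x j - x i).

Lemma node_prod_neq0 (j : 'I_n) : node_prod j != 0.
Proof.
by apply/prodf_neq0 => i ij; rewrite subr_eq0 x_distinct // eq_sym.
Qed.

Lemma node_prod_vanish (j : 'I_n) (P : pred 'I_n) :
  P j -> \prod_(i | P i) (x j - x i) = 0.
Proof. by move=> Pj; rewrite (bigD1 j) //= subrr mul0r. Qed.

Lemma node_prod_remove (j m : 'I_n) : m != j ->
  \prod_(i | (i != j) && (i != m)) (x j - x i) = node_prod j / (x j - x m).
Proof.
move=> mj; have xjm : x j - x m != 0 by rewrite subr_eq0 x_distinct // eq_sym.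
by rewrite /node_prod [in RHS](bigD1 m) //= mulrC mulKf.
Qed.

Lemma Bpoly_at_node (j : 'I_n) : (Bpoly x j).[x j] = - node_prod j.
Proof.
rewrite /Bpoly hornerN horner_prod; congr (- _).
by apply: eq_bigr => i _; rewrite hornerXsubC.
Qed.

Lemma powmx_jac : powmx *m Fjac a x = diag_mx (\row_j - node_prod j).
Proof.
apply/matrixP => j l; rewrite !mxE.
under eq_bigr => k _ do rewrite !mxE /Fpoly mderivB mderivC subr0.
rewrite dVpoly_generating_eval; case: (eqVneq j l) => [->|jl] /=.
  by rewrite mulr1n.
by rewrite mulr0n node_prod_vanish ?oppr0.
Qed.

Lemma jac_unit : Fjac a x \in unitmx.
Proof.
rewrite unitmxE unitfE; apply/negP => /eqP det0.
have := congr1 determinant powmx_jac.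
rewrite det_mulmx det0 mulr0 det_diag => /esym/eqP; apply/negP/prodf_neq0.
by move=> i _; rewrite mxE oppr_eq0 node_prod_neq0.
Qed.

Lemma invjac_mul (v : 'cV[C]_n) (j : 'I_n) :
  (invmx (Fjac a x) *m v) j 0 = - (powmx *m v) j 0 / node_prod j.
Proof.
have -> : powmx = diag_mx (\row_j - node_prod j) *m invmx (Fjac a x).
  by rewrite -powmx_jac mulmxK // jac_unit.
rewrite -mulmxA mul_diag_mx !mxE !mulNr opprK mulrC mulKf //.
exact: node_prod_neq0.
Qed.

Lemma powmx_F (j : 'I_n) : (powmx *m Fval a x) j 0 = - (ppoly a).[x j].
Proof.
rewrite !mxE.
under eq_bigr => k _ do rewrite !mxE /Fpoly mevalB mevalC mulrBr.
rewrite sumrB Vpoly_generating_eval node_prod_vanish // sub0r.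
rewrite /ppoly hornerD hornerXn horner_sum opprD; congr (_ - _).
by apply: eq_bigr => k _; rewrite hornerZ hornerXn mulrC.
Qed.

Lemma newton_correction (j : 'I_n) :
  (invmx (Fjac a x) *m Fval a x) j 0 = Weier a x j.
Proof. by rewrite invjac_mul powmx_F opprK. Qed.

Lemma powmx_F2 (j : 'I_n) (d : 'cV[C]_n) :
  (powmx *m F2 a x d d) j 0 =
  \sum_m \sum_l d m 0 * d l 0 * hess_kernel x (x j) l m.
Proof.
rewrite !mxE.
transitivity (\sum_(k < n) \sum_(m < n) \sum_(l < n)
   x j ^+ k * (d m 0 * (d l 0 * (mderiv l (mderiv m (Vpoly R k))).@[x]))).
  apply: eq_bigr => k _; rewrite !mxE summxE big_distrr; apply: eq_bigr => m _.
  rewrite !mxE big_distrr /= big_distrr; apply: eq_bigr => l _ /=.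
  rewrite !mxE /Fpoly !mderivB !mderivC !subr0; ring.
rewrite exchange_big; apply: eq_bigr => m _.
rewrite exchange_big; apply: eq_bigr => l _.
rewrite -ddVpoly_generating_eval big_distrr; apply: eq_bigr => k _ /=; ring.
Qed.

Lemma hess_kernel_node (j l m : 'I_n) :
  hess_kernel x (x j) l m =
  if l == m then 0
  else if l == j then node_prod j / (x j - x m)
  else if m == j then node_prod j / (x j - x l)
  else 0.
Proof.
rewrite /hess_kernel; case: eqP => // /eqP lm.
case: (eqVneq l j) => [lj|lj].
  move: lm; rewrite lj eq_sym => mj; rewrite -node_prod_remove //.
  by apply: eq_bigl => i; rewrite andbC.
case: (eqVneq m j) => [mj|mj]; first by rewrite mj -node_prod_remove.
by rewrite node_prod_vanish // eq_sym mj eq_sym lj.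
Qed.

Lemma quad_form_at_node (w : 'I_n -> C) (j : 'I_n) :
  \sum_m \sum_l w m * w l * hess_kernel x (x j) l m =
  2 * w j * \sum_(m | m != j) w m * (node_prod j / (x j - x m)).
Proof.
rewrite (bigD1 j) //= (bigD1 j) //= hess_kernel_node eqxx mulr0 add0r.
have row_j : \sum_(l | l != j) w j * w l * hess_kernel x (x j) l j =
    w j * \sum_(m | m != j) w m * (node_prod j / (x j - x m)).
  rewrite big_distrr; apply: eq_bigr => l lj /=.
  by rewrite hess_kernel_node (negbTE lj) eqxx !mulrA.
have col_j : \sum_(m | m != j) \sum_l w m * w l * hess_kernel x (x j) l m =
    w j * \sum_(m | m != j) w m * (node_prod j / (x j - x m)).
  rewrite big_distrr; apply: eq_bigr => m mj /=.
  rewrite (bigD1 j) //= hess_kernel_node eq_sym (negbTE mj) eqxx.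
  rewrite big1 ?addr0; first by rewrite !mulrA [w m * w j]mulrC.
  by move=> l lj; rewrite hess_kernel_node (negbTE lj) (negbTE mj) if_same mulr0.
by rewrite row_j col_j -mulrA mulr_natl mulr2n.
Qed.

Lemma cheb_step_weierstrass (j : 'I_n) :
  cheb_step a x j 0 =
    x j - Weier a x j * (1 + \sum_(nu < n | nu != j) Weier a x nu / (x nu - x j)).
Proof.
rewrite /cheb_step mxE [(\col_k _) j 0]mxE mxE invjac_mul mulmxDr.
rewrite [X in - X / _]mxE -scalemxAr [X in - (_ + X) / _]mxE powmx_F powmx_F2.
rewrite quad_form_at_node.
under eq_bigr => m _ do rewrite newton_correction.
rewrite newton_correction.
set T := \sum_(nu < n | nu != j) Weier a x nu / (x nu - x j).
have -> : \sum_(m | m != j) Weier a x m * (node_prod j / (x j - x m)) =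
          - (node_prod j * T).
  rewrite /T mulr_sumr -sumrN; apply: eq_bigr => m mj.
  by rewrite -opprB invrN !mulrN mulrCA.
have -> : (ppoly a).[x j] = Weier a x j * node_prod j.
  by rewrite /Weier mulfVK ?node_prod_neq0.
have := node_prod_neq0 j; move: (Weier a x j) (node_prod j) => w P P0.
by field.
Qed.

(* The two right-hand sides of the theorem agree, since B^(l)(x_l) = - P_l. *)
Lemma weierstrass_Bpoly_form (j : 'I_n) :
  Weier a x j * (1 + \sum_(nu < n | nu != j) Weier a x nu / (x nu - x j)) =
  (ppoly a).[x j] / (Bpoly x j).[x j] *
    (\sum_(nu < n | nu != j)
        (ppoly a).[x nu] / ((x nu - x j) * (Bpoly x nu).[x nu]) - 1).
Proof.
under [in RHS]eq_bigr => nu _ do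
  rewrite Bpoly_at_node mulrN invrN mulrN invfM mulrA mulrAC.
rewrite sumrN Bpoly_at_node /Weier.
by rewrite invrN mulrN mulNr -opprD mulrN opprK addrC.
Qed.

End ChebyshevStep.

Unset Implicit Arguments.
Set Strict Implicit.
Theorem mainTheorem7 (R : realType) (n : nat) (a : 'I_n -> R)
    (x : 'I_n -> R[i]) :
  (2 <= n)%N ->
  (forall i j : 'I_n, i != j -> x i != x j) ->
  forall j : 'I_n,
    cheb_step a x j 0 =
      x j - Weier a x j *
            (1 + \sum_(nu < n | nu != j) Weier a x nu / (x nu - x j))
    /\
    cheb_step a x j 0 =
      x j - (ppoly a).[x j] / (Bpoly x j).[x j] *
            (\sum_(nu < n | nu != j)
                (ppoly a).[x nu] / ((x nu - x j) * (Bpoly x nu).[x nu]) - 1).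
Proof.
move=> _ x_distinct j; have step := cheb_step_weierstrass a x_distinct j.
by split; rewrite // step weierstrass_Bpoly_form.
Qed.
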